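(* Let $m=2k+1$ with $k\in\mathbb{N}$ and $\beta\in(1,k+2)$. For $i\in\{1,\ldots,k\}$ the fixed point $\frac{i}{\beta-1}$ of $T_{\beta,i}$ lies in the interior of $[\frac{i}{\beta},\frac{(i-1)\beta+m-(i-1)}{\beta(\beta-1)}]$, and for $i\in\{k+1,\ldots,m-1\}$ it lies in the interior of $[\frac{i+1}{\beta},\frac{i\beta+m-i}{\beta(\beta-1)}]$.
   Context: $T_{\beta,i}(x)=\beta x-i$. *)

From mathcomp Require Import all_boot all_order all_algebra.
Set Implicit Arguments. Unset Strict Implicit. Unset Printing Implicit Defensive.
Import Order.TTheory GRing.Theory Num.Theory.
Local Open Scope ring_scope.

Definition T {R : ringType} (beta : R) (i : nat) (x : R) : R := beta * x - i%:R.

From mathcomp Require Import all_boot all_order all_algebra.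
From mathcomp Require Import zify ring lra.
Import Order.TTheory GRing.Theory Num.Theory.
Local Open Scope ring_scope.

(* Clearing the positive denominators, [i / beta < i / (beta - 1)] always holds,
   [(i + 1) / beta < i / (beta - 1)] amounts to [beta < i + 1], and
   [i / (beta - 1) < (j beta + m - j) / (beta (beta - 1))] amounts to
   [(i - j) beta < m - j].  For [j = i - 1] with [i <= k] this is
   [beta < 2k + 2 - i], implied by [beta < k + 2]; for [j = i] it is [i < m]. *)

Lemma T_fixed_point (F : fieldType) (beta : F) (i : nat) :
  beta != 1 -> T beta i (i%:R / (beta - 1)) = i%:R / (beta - 1).
Proof. by move=> hb1; rewrite /T; field; rewrite subr_eq0. Qed.

Section DenominatorsBeta.

Variables (R : realFieldType) (beta : R).
Hypothesis beta_gt1 : 1 < beta.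

Let beta_gt0 : 0 < beta. Proof. exact: lt_trans ltr01 beta_gt1. Qed.
Let beta_sub1_gt0 : 0 < beta - 1. Proof. by rewrite subr_gt0. Qed.

Lemma ltr_pdiv_beta_sub1 (a c : R) :
  a * (beta - 1) < c * beta -> a / beta < c / (beta - 1).
Proof. by move=> hac; rewrite ltr_pdivrMr // mulrAC ltr_pdivlMr. Qed.

Lemma ltr_pdiv_beta_mul_sub1 (a c : R) :
  a * beta < c -> a / (beta - 1) < c / (beta * (beta - 1)).
Proof.
move=> hac.
have -> : a / (beta - 1) = (a * beta) / (beta * (beta - 1)).
  by field; rewrite ?gt_eqF.
by rewrite ltr_pM2r // invr_gt0 mulr_gt0.
Qed.

End DenominatorsBeta.

Theorem lemma3p3 (R : realFieldType) (k : nat) (beta : R) :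
  let m := (2 * k + 1)%N in
  1 < beta -> beta < (k + 2)%:R ->
  (forall i : nat, (1 <= i <= k)%N ->
     T beta i (i%:R / (beta - 1)) = i%:R / (beta - 1) /\
     i%:R / (beta - 1) \in
       `] i%:R / beta,
          ((i - 1)%:R * beta + (m - (i - 1))%:R) / (beta * (beta - 1)) [) /\
  (forall i : nat, (k + 1 <= i <= m - 1)%N ->
     T beta i (i%:R / (beta - 1)) = i%:R / (beta - 1) /\
     i%:R / (beta - 1) \in
       `] (i + 1)%:R / beta,
          (i%:R * beta + (m - i)%:R) / (beta * (beta - 1)) [).
Proof.
move=> m hb hbk; rewrite natrD in hbk.
have hfix (i : nat) := T_fixed_point _ beta i (negbT (gt_eqF hb)).
split=> i /andP [hi1 hi2]; split => //; rewrite in_itv /=; apply/andP; split.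
- apply: ltr_pdiv_beta_sub1 => //.
  have : 1 <= i%:R :> R by rewrite ler1n.
  lra.
- apply: ltr_pdiv_beta_mul_sub1 => //.
  have -> : (m - (i - 1))%N = ((2 * k + 2) - i)%N by rewrite /m; lia.
  rewrite !natrB ?natrD ?natrM //; last lia.
  have : i%:R <= k%:R :> R by rewrite ler_nat.
  lra.
- apply: ltr_pdiv_beta_sub1 => //.
  have : (k + 1)%:R <= i%:R :> R by rewrite ler_nat.
  rewrite !natrD; lra.
- apply: ltr_pdiv_beta_mul_sub1 => //.
  have him : (i < m)%N by rewrite /m in hi2 *; lia.
  rewrite natrB 1?ltnW //.
  have : i%:R < m%:R :> R by rewrite ltr_nat.
  lra.
Qed.
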